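(* Let $X$ be an extensible marked Dynkin diagram with $d$ nodes and let $n\ge d$ be such that $\det(X_n)\ne0$. Then $P(X_n)/Q(X_n)$ is a cyclic group generated by the class $[\overline{\omega}_1^{(n)}]$ of $\overline{\omega}_1^{(n)}=\omega_n^{(n)}$.
   Context: A marked Dynkin diagram $X$ has nodes $1,\dots,d$ with node $d$ distinguished and symmetrizable generalized Cartan matrix $C(X)$. For $n\ge d$, $X_n$ is obtained by attaching a simply-laced chain of new nodes $d+1,\dots,n$ to node $d$ (so $C(X_n)$ has $C(X)$ as upper-left block, $2$ on the remaining diagonal, $-1$ in positions $(i,i+1),(i+1,i)$ for $d\le i<n$, $0$ elsewhere). $\det(Y)$ is the determinant of the generalized Cartan matrix of $Y$. The sequence $\det(X_n)$, $n\ge d$, is arithmetic with common difference $\Delta$; $X$ is extensible if $\Delta\ne0$, $\det(X)\ne0$ and $\gcd(\Delta,\det X)=1$. For the Kac–Moody algebra $\mathfrak g(X_n)$: simple roots $\alpha_i^{(n)}$, simple coroots $\check\alpha_i^{(n)}$ with $\alpha_j^{(n)}(\check\alpha_i^{(n)})=C(X_n)_{ij}$; root lattice $Q(X_n)=\bigoplus_i\mathbb Z\alpha_i^{(n)}$; weight lattice $P(X_n)=\{\lambda\in\mathfrak h^*(X_n):\lambda(\check\alpha_i^{(n)})\in\mathbb Z\ \forall i\}$; fundamental weights $\omega_i^{(n)}$ with $\omega_i^{(n)}(\check\alpha_j^{(n)})=\delta_{ij}$. *)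

From HB Require Import structures.
From mathcomp Require Import all_boot all_order all_algebra all_field.
Set Implicit Arguments. Unset Strict Implicit. Unset Printing Implicit Defensive.
Import Order.TTheory GRing.Theory Num.Theory.
Local Open Scope ring_scope.

(* A marked Dynkin diagram X with d nodes (0-indexed 0..d-1 here, node d of the
   paper = index d-1) is given by its d x d integer matrix C = C(X). *)

Definition is_gcm (d : nat) (C : 'M[int]_d) : Prop :=
  forall i j : 'I_d,
    (i = j -> C i j = 2) /\
    (i <> j -> C i j <= 0) /\
    (C i j = 0 <-> C j i = 0).

Definition symmetrizable (d : nat) (C : 'M[int]_d) : Prop :=
  exists D : 'I_d -> rat, (forall i, 0 < D i) /\
    forall i j : 'I_d, D i * (C i j)%:~R = D j * (C j i)%:~R.

Definition Cnat (d : nat) (C : 'M[int]_d) (i j : nat) : int :=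
  match @insub _ (fun k => k < d)%N _ i, @insub _ (fun k => k < d)%N _ j with
  | Some i', Some j' => C i' j'
  | _, _ => 0
  end.

(* C(X_n): C as upper-left block, then a simply-laced chain attached to the
   distinguished node (0-indexed d-1) with new nodes d, ..., n-1 (0-indexed). *)
Definition CX (d : nat) (C : 'M[int]_d) (n : nat) : 'M[int]_n :=
  \matrix_(i < n, j < n)
    if ((i < d) && (j < d))%N then Cnat C i j
    else if i == j then 2
    else if (((i.+1 == j) || (j.+1 == i)) && (d.-1 <= minn i j))%N then -1
    else 0.

(* common difference of the arithmetic sequence det(X_n), n >= d *)
Definition Delta (d : nat) (C : 'M[int]_d) : int :=
  \det (CX C d.+1) - \det (CX C d).

Definition extensible (d : nat) (C : 'M[int]_d) : Prop :=
  Delta C != 0 /\ \det C != 0 /\ coprimez (Delta C) (\det C).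

(* Realization of g(X_n) when det C(X_n) <> 0: the simple coroots form a basis
   of h, so an element lambda of h^* is determined by (and identified with)
   the row vector of its values lambda(coroot_i), i < n. *)
Definition hstar (n : nat) := 'rV[algC]_n.

Definition pairing (n : nat) (lam : hstar n) (i : 'I_n) : algC := lam 0 i.

Definition simple_root (d : nat) (C : 'M[int]_d) (n : nat) (j : 'I_n) : hstar n :=
  \row_(i < n) ((CX C n i j)%:~R : algC).

(* fundamental weight omega_k^{(n)}, k 1-indexed as in the paper *)
Definition fund_weight (n k : nat) : hstar n :=
  \row_(j < n) ((j.+1 == k)%:R : algC).

Definition in_weight_lattice (n : nat) (lam : hstar n) : Prop :=
  forall i : 'I_n, exists z : int, pairing lam i = z%:~R.

Definition in_root_lattice (d : nat) (C : 'M[int]_d) (n : nat) (lam : hstar n) : Prop :=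
  exists c : 'I_n -> int, lam = \sum_(j < n) (simple_root C j) *~ c j.

From HB Require Import structures.
From mathcomp Require Import all_boot all_order all_algebra all_field.
From mathcomp Require Import zify.
Import Order.TTheory GRing.Theory Num.Theory.
Local Open Scope ring_scope.
Set Implicit Arguments. Unset Strict Implicit.

(* The determinants of the X_m obey the continuant recurrence
   det X_(m+2) = 2 det X_(m+1) - det X_m once the chain is reached, so they
   form an arithmetic progression of difference Delta and
   gcd (det X_(m+1), det X_m) = gcd (Delta, det X) = 1.
   In coroot coordinates P(X_n) is Z^n and Q(X_n) is the image of
   M = C(X_n). Write 1 = a det M + b det M' with M' = C(X_(n-1)); Cramer's
   rule for M and for M with its last column replaced by e_n then writes any
   v in Z^n as M c + k e_n, and e_n is the coordinate vector of omega_n. *)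

Lemma sign_addnn (R : pzRingType) k : (-1) ^+ (k + k) = 1 :> R.
Proof. by rewrite addnn -signr_odd odd_double. Qed.

Lemma sign_addSnn (R : pzRingType) k : (-1) ^+ (k.+1 + k) = -1 :> R.
Proof. by rewrite addSn exprS sign_addnn mulr1. Qed.

Lemma expand_det_tridiag (R : comPzRingType) m (A : 'M[R]_m.+2) :
    (forall j : 'I_m.+2, (j < m)%N -> A ord_max j = 0) ->
    (forall i : 'I_m.+2, (i < m)%N -> A i ord_max = 0) ->
  let A' := row' ord_max (col' ord_max A) in
  \det A = A ord_max ord_max * \det A'
           - A ord_max (inord m) * A (inord m) ord_max
             * \det (row' ord_max (col' ord_max A')).
Proof.
move=> Ar0 Ac0 A'; set A'' := row' _ (col' _ A').
have pen : widen_ord (leqnSn m.+1) ord_max = inord m :> 'I_m.+2.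
  by apply: val_inj; rewrite /= inordK.
have cof_max : cofactor A ord_max ord_max = \det A'.
  by rewrite /cofactor sign_addnn mul1r.
have cof_pen : cofactor A ord_max (inord m) = - A (inord m) ord_max * \det A''.
  rewrite /cofactor inordK // sign_addSnn mulN1r mulNr; congr (- _).
  have lift_pen_max : lift (inord m) ord_max = ord_max :> 'I_m.+2.
    by apply: val_inj; rewrite /= /bump inordK // leqnn.
  have lift_max_max : lift ord_max ord_max = inord m :> 'I_m.+2.
    by apply: val_inj; rewrite /= /bump inordK // ltnn.
  rewrite (expand_det_col _ ord_max) big_ord_recr /= big1 ?add0r; last first.
    by move=> i _; rewrite !mxE lift_pen_max Ac0 ?mul0r //= /bump; have := ltn_ord i; lia.
  rewrite !mxE lift_pen_max lift_max_max /cofactor sign_addnn mul1r; congr (_ * \det _).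
  apply/matrixP => i j; rewrite !mxE; congr (A _ _); apply: val_inj => /=.
  by rewrite /bump inordK //; have := ltn_ord j; lia.
rewrite (expand_det_row _ ord_max) !big_ord_recr /= big1 ?add0r; last first.
  by move=> j _; rewrite Ar0 ?mul0r //=.
by rewrite pen cof_max cof_pen addrC mulNr mulrN mulrA.
Qed.

Lemma widen_neq_max n (i : 'I_n) : (widen_ord (leqnSn n) i == ord_max) = false.
Proof. by rewrite -val_eqE /= ltn_eqF. Qed.

Lemma lift_neq_max n (i : 'I_n) : (lift ord_max i == ord_max) = false.
Proof. by rewrite eq_sym (negbTE (neq_lift _ _)). Qed.

Section ColMaxDelta.
Variables (R : comPzRingType) (n : nat) (M : 'M[R]_n.+1).

Local Notation e := (delta_mx ord_max 0 : 'cV[R]_n.+1).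

Definition col_max_delta : 'M[R]_n.+1 :=
  \matrix_(i, j) if j == ord_max then e i 0 else M i j.

Lemma det_col_max_delta :
  \det col_max_delta = \det (row' ord_max (col' ord_max M)).
Proof.
rewrite (expand_det_col _ ord_max) big_ord_recr /= big1 ?add0r; last first.
  by move=> i _; rewrite !mxE eqxx widen_neq_max mul0r.
rewrite !mxE !eqxx mul1r /cofactor sign_addnn mul1r; congr (\det _).
by apply/matrixP => i j; rewrite !mxE lift_neq_max.
Qed.

Lemma mul_col_max_delta w :
  col_max_delta *m w = M *m (w - w ord_max 0 *: e) + w ord_max 0 *: e.
Proof.
apply/colP => i; rewrite !mxE !big_ord_recr /= !mxE !eqxx mulr1 subrr mulr0 addr0.
rewrite [_ * w _ _]mulrC; congr (_ + _); apply: eq_bigr => j _.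
by rewrite !mxE widen_neq_max mulr0 subr0.
Qed.

Lemma sub_delta_max_in_image a b :
    a * \det M + b * \det (row' ord_max (col' ord_max M)) = 1 ->
  forall v : 'cV[R]_n.+1, exists k : R, exists c : 'cV[R]_n.+1, v - k *: e = M *m c.
Proof.
move=> bezout v; set w := \adj col_max_delta *m v.
exists (b * w ord_max 0), (a *: (\adj M *m v) + b *: (w - w ord_max 0 *: e)).
have vE : v = a *: (M *m (\adj M *m v)) + b *: (col_max_delta *m w).
  rewrite !mulmxA mul_mx_adj mul_mx_adj det_col_max_delta !mul_scalar_mx !scalerA.
  by rewrite -scalerDl bezout scale1r.
rewrite {1}vE mul_col_max_delta [RHS]mulmxDr -!scalemxAr scalerDr -scalerA.
by rewrite addrA addrK.
Qed.

End ColMaxDelta.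

Lemma sub_succ_const (R : pzRingType) (f : nat -> R) m0 :
    (forall m, (m0 <= m)%N -> f m.+2 = 2 * f m.+1 - f m) ->
  forall m, (m0 <= m)%N -> f m.+1 - f m = f m0.+1 - f m0.
Proof.
move=> rec m /subnKC <-; elim: (m - m0)%N => [|k IH]; first by rewrite addn0.
by rewrite addnS rec ?leq_addr // -IH mulr_natl mulr2n addrAC addrK.
Qed.

Lemma gcdz_step_const (f : nat -> int) (D : int) m0 :
    (forall m, (m0 <= m)%N -> f m.+1 = f m + D) ->
  forall m, (m0 <= m)%N -> gcdz D (f m) = gcdz D (f m0).
Proof.
move=> step m /subnKC <-; elim: (m - m0)%N => [|k IH]; first by rewrite addn0.
by rewrite addnS step ?leq_addr // gcdzDr.
Qed.

Section ChainExtension.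
Variables (d : nat) (C : 'M[int]_d).

Lemma CX_d : CX C d = C.
Proof.
apply/matrixP => i j; rewrite mxE !ltn_ord /Cnat.
rewrite (insubT (fun k => k < d)%N (ltn_ord i)) (insubT (fun k => k < d)%N (ltn_ord j)).
by congr (C _ _); apply: val_inj.
Qed.

Lemma CX_row'_col'_max m : row' ord_max (col' ord_max (CX C m.+1)) = CX C m.
Proof. by apply/matrixP => i j; rewrite !mxE (inj_eq lift_inj) !lift_max. Qed.

Lemma CX_chain n (i j : 'I_n) : (d <= maxn i j)%N ->
  CX C n i j = if i == j :> nat then 2 else if (i.+1 == j) || (j.+1 == i) then -1 else 0.
Proof.
move=> hij; rewrite mxE -val_eqE; have -> : ((i < d) && (j < d))%N = false by lia.
case: (i == j :> nat) => //; have [adj|] //= := boolP ((i.+1 == j) || (j.+1 == i))%N.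
by rewrite ifT //; move: adj => /orP[] /eqP; lia.
Qed.

Lemma det_CX_rec m : (d <= m.+1)%N ->
  \det (CX C m.+2) = 2 * \det (CX C m.+1) - \det (CX C m).
Proof.
move=> hm; have inord_m : (inord m : 'I_m.+2) = m :> nat by rewrite inordK.
rewrite expand_det_tridiag; first last.
- by move=> i hi; rewrite CX_chain /=; [rewrite !ifF //; lia | lia].
- by move=> j hj; rewrite CX_chain /=; [rewrite !ifF //; lia | lia].
rewrite !CX_row'_col'_max !CX_chain /= ?inord_m; try lia.
rewrite !eqxx !orbT (ltn_eqF (ltnSn m)) (gtn_eqF (ltnSn m)) (gtn_eqF (ltnW (ltnSn m.+1))) /=.
by rewrite mulrNN mul1r.
Qed.

Lemma det_CX_succ m : (d <= m.+1)%N ->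
  \det (CX C m.+1) = \det (CX C m) + Delta C.
Proof.
pose f k := \det (CX C k).
have rec k : (d.-1 <= k)%N -> f k.+2 = 2 * f k.+1 - f k.
  by move=> hk; apply: det_CX_rec; lia.
move=> hm; rewrite /Delta -/(f m) -/(f m.+1) -/(f d) -/(f d.+1).
rewrite (sub_succ_const rec (leq_pred d)) -(sub_succ_const rec (_ : d.-1 <= m)%N); last lia.
by rewrite addrC subrK.
Qed.

Lemma coprimez_det_CX_succ m : (d <= m.+1)%N -> coprimez (Delta C) (\det C) ->
  coprimez (\det (CX C m.+1)) (\det (CX C m)).
Proof.
pose f k := \det (CX C k).
have step k : (d.-1 <= k)%N -> f k.+1 = f k + Delta C.
  by move=> hk; apply: det_CX_succ; lia.
move=> hm /eqP cop; apply/eqP; rewrite -cop det_CX_succ // gcdzC gcdzDl gcdzC.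
have -> : \det C = f d by rewrite /f CX_d.
rewrite -/(f m) (gcdz_step_const step (_ : d.-1 <= m)%N); last lia.
by rewrite (gcdz_step_const step (leq_pred d)).
Qed.

End ChainExtension.

Section Lattices.
Variables (d : nat) (C : 'M[int]_d) (n : nat).

Lemma sum_simple_roots (c : 'I_n -> int) :
  \sum_j simple_root C j *~ c j = (map_mx intr (CX C n *m \col_j c j))^T.
Proof.
apply/rowP => i; rewrite summxE !mxE rmorph_sum; apply: eq_bigr => j _.
by rewrite -scaler_int !mxE rmorphM mulrC.
Qed.

Lemma in_root_latticeP (lam : hstar n) :
  in_root_lattice C lam <-> exists c : 'cV[int]_n, lam = (map_mx intr (CX C n *m c))^T.
Proof.
split=> [[c ->]|[c ->]]; first by exists (\col_j c j); rewrite sum_simple_roots.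
exists (fun j => c j 0); rewrite sum_simple_roots; congr (map_mx _ (_ *m _))^T.
by apply/colP => j; rewrite mxE.
Qed.

Lemma in_weight_latticeP (lam : hstar n) :
  in_weight_lattice lam <-> exists v : 'cV[int]_n, lam = (map_mx intr v)^T.
Proof.
split=> [lamZ|[v -> i]]; last by exists (v i 0); rewrite /pairing !mxE.
exists (\col_i Num.floor (lam 0 i)); apply/rowP => i; rewrite !mxE.
by have [z] := lamZ i; rewrite /pairing => ->; rewrite intrKfloor.
Qed.

End Lattices.

Lemma fund_weight_in_weight_lattice n k : in_weight_lattice (fund_weight n k).
Proof. by move=> i; exists (i.+1 == k : nat); rewrite /pairing mxE -pmulrn. Qed.

Lemma fund_weight_max n :
  fund_weight n.+1 n.+1 = (map_mx intr (delta_mx ord_max 0))^T.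
Proof. by apply/rowP => i; rewrite !mxE eqxx andbT rmorph_nat eqSS -val_eqE. Qed.

Theorem lemma3p1 (d : nat) (C : 'M[int]_d) (hd : (0 < d)%N)
    (hgcm : is_gcm C) (hsym : symmetrizable C) (hext : extensible C)
    (n : nat) (hn : (d <= n)%N) (hdet : \det (CX C n) != 0) :
  (forall lam : hstar n, in_root_lattice C lam -> in_weight_lattice lam) /\
  in_weight_lattice (fund_weight n n) /\
  (forall lam : hstar n, in_weight_lattice lam ->
     exists k : int, in_root_lattice C (lam - (fund_weight n n) *~ k)).
Proof.
have [_ [_ coprime_Delta_det]] := hext.
split; [|split].
- move=> lam /in_root_latticeP [c ->]; apply/in_weight_latticeP.
  by exists (CX C n *m c).
- exact: fund_weight_in_weight_lattice.
case: n hn hdet => [|n] hn _; first by have := leq_trans hd hn.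
move=> lam /in_weight_latticeP [v ->].
have /coprimezP [[a b] /= bezout] := coprimez_det_CX_succ hn coprime_Delta_det.
rewrite -(CX_row'_col'_max C n) in bezout.
have [k [c vE]] := sub_delta_max_in_image bezout v.
exists k; apply/in_root_latticeP; exists c.
by rewrite -vE fund_weight_max map_mxB map_mxZ !linearB linearZ /= scaler_int.
Qed.
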